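(* Let $f_1:X_1\to Y_1$ and $f_2:X_2\to Y_2$ be safe maps in $\mathsf{Nom}$. Then $(u_1,u_2)\in X_1\times X_2$ is $(f_1\times f_2)$-safe if and only if $u_i$ is $f_i$-safe for $i=1,2$, $\mathsf{bv}_{f_1}(u_1)\#u_2$, and $\mathsf{bv}_{f_2}(u_2)\#u_1$.
   Context: Nominal sets over a countably infinite set $\mathcal V$ of names; $\mathsf{supp}(u)$ the least finite support; for a finite set $S$ of names, $S\#u$ means $S\cap\mathsf{supp}(u)=\emptyset$; products carry the coordinatewise action. For an equivariant $f:X\to Y$: $u\in X$ is $f$-safe if $|\mathsf{supp}(u)|=\max\{|\mathsf{supp}(v)|:v\in f^{-1}(f(u))\}$ (the maximum existing); $\mathsf{bv}_f(u)=\mathsf{supp}(u)\setminus\mathsf{supp}(f(u))$; $f$ is safe if every element of $Y$ has an $f$-safe preimage. *)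

From mathcomp Require Import all_boot.
From Stdlib Require Import ClassicalEpsilon.

Set Implicit Arguments.
Unset Strict Implicit.
Unset Printing Implicit Defensive.

(* Names: the countably infinite set V is nat. *)

Record fperm := FPerm {
  fp : nat -> nat;
  fpinv : nat -> nat;
  fpK : cancel fp fpinv;
  fpinvK : cancel fpinv fp;
  fp_fin : exists n, forall a, n <= a -> fp a = a }.

Definition supports_by (T : Type) (act : fperm -> T -> T) (S : seq nat) (x : T) :=
  forall p : fperm, (forall a, a \in S -> fp p a = a) -> act p x = x.

Record nomset := NomSet {
  ncar :> Type;
  nact : fperm -> ncar -> ncar;
  nact_id : forall p x, (forall a, fp p a = a) -> nact p x = x;
  nact_comp : forall p q r x, (forall a, fp r a = fp p (fp q a)) ->
                nact r x = nact p (nact q x);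
  nfin : forall x, exists S : seq nat, supports_by nact S x }.

Definition supports (X : nomset) (S : seq nat) (x : X) := supports_by (@nact X) S x.

Definition in_supp (X : nomset) (x : X) (a : nat) : Prop :=
  forall S, supports S x -> a \in S.

Definition supp (X : nomset) (x : X) : seq nat :=
  epsilon (inhabits [::]) (fun s => uniq s /\ forall a, a \in s <-> in_supp x a).

Definition fresh (X : nomset) (S : seq nat) (u : X) : Prop :=
  forall a, a \in S -> a \notin supp u.

Definition equivariant (X Y : nomset) (f : X -> Y) : Prop :=
  forall p x, f (@nact X p x) = @nact Y p (f x).

Definition fsafe (X Y : nomset) (f : X -> Y) (u : X) : Prop :=
  forall v : X, f v = f u -> size (supp v) <= size (supp u).

Definition bv (X Y : nomset) (f : X -> Y) (u : X) : seq nat :=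
  [seq a <- supp u | a \notin supp (f u)].

Definition safe (X Y : nomset) (f : X -> Y) : Prop :=
  forall y : Y, exists x : X, f x = y /\ fsafe f x.

Definition prod_act (X1 X2 : nomset) (p : fperm) (u : X1 * X2) : X1 * X2 :=
  (@nact X1 p u.1, @nact X2 p u.2).

Lemma prod_act_id (X1 X2 : nomset) p (x : X1 * X2) :
  (forall a, fp p a = a) -> prod_act p x = x.
Proof. by case: x => x1 x2 H; rewrite /prod_act /= !nact_id. Qed.

Lemma prod_act_comp (X1 X2 : nomset) p q r (x : X1 * X2) :
  (forall a, fp r a = fp p (fp q a)) -> prod_act r x = prod_act p (prod_act q x).
Proof. by case: x => x1 x2 H; rewrite /prod_act /= (nact_comp _ H) (nact_comp _ H). Qed.

Lemma prod_fin (X1 X2 : nomset) (x : X1 * X2) :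
  exists S : seq nat, supports_by (@prod_act X1 X2) S x.
Proof.
case: x => x1 x2.
have [S1 H1] := nfin x1; have [S2 H2] := nfin x2.
exists (S1 ++ S2) => p Hp; rewrite /prod_act /= H1 ?H2 // => a Ha;
  apply: Hp; rewrite mem_cat Ha ?orbT //.
Qed.

Definition prod_nom (X1 X2 : nomset) : nomset :=
  @NomSet (X1 * X2) (@prod_act X1 X2) (@prod_act_id X1 X2)
          (@prod_act_comp X1 X2) (@prod_fin X1 X2).

Definition prod_map (X1 X2 Y1 Y2 : nomset) (f1 : X1 -> Y1) (f2 : X2 -> Y2)
  : prod_nom X1 X2 -> prod_nom Y1 Y2 := fun u => (f1 u.1, f2 u.2).

From mathcomp Require Import all_boot.
From Stdlib Require Import ClassicalEpsilon Classical.
From mathcomp Require Import zify.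

Set Implicit Arguments.
Unset Strict Implicit.
Unset Printing Implicit Defensive.

(* Write [common x1 x2] for supp x1 ∩ supp x2.  Then
     |supp (x1, x2)| = |supp x1| + |supp x2| - |common x1 x2|,
   and the freshness conditions bv_{f1}(u1) # u2, bv_{f2}(u2) # u1 say exactly
   that common u1 u2 ⊆ supp (f1 u1) ∩ supp (f2 u2).  Since equivariant maps
   shrink supports, such a common part is also common to any (v1, v2) in the
   fibre of (u1, u2); this gives the direction "<=" by counting.
   For "=>", we use safety of f1 and f2 together with a freshening argument
   (renaming bound names away from a finite set with a permutation fixing the
   image's support) to build an f_i-safe (w1, w2) in the fibre of (u1, u2)
   whose common part lies in the images' supports.  Comparing sizes with
   (u1, u2) forces |supp u_i| = |supp w_i| and common u1 u2 = common w1 w2. *)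

Definition fresh_name (L : seq nat) : nat := (foldr maxn 0 L).+1.

Lemma fresh_name_gt L a : a \in L -> a < fresh_name L.
Proof.
rewrite /fresh_name ltnS; elim: L => //= b L IH; rewrite inE.
case/orP => [/eqP ->|/IH h]; first exact: leq_maxl.
exact: leq_trans h (leq_maxr _ _).
Qed.

Lemma fresh_nameP L : fresh_name L \notin L.
Proof. by apply/negP => /fresh_name_gt; rewrite ltnn. Qed.

Definition transp (a b c : nat) : nat :=
  if c == a then b else if c == b then a else c.

Lemma transpK a b : involutive (transp a b).
Proof. by move=> c; rewrite /transp; do !case: eqP => //=; congruence. Qed.

Lemma transp_id a b c : c != a -> c != b -> transp a b c = c.
Proof. by rewrite /transp => /negbTE -> /negbTE ->. Qed.

Lemma transp_fin a b : exists n, forall c, n <= c -> transp a b c = c.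
Proof.
exists (maxn a b).+1 => c hc; apply: transp_id; apply/eqP => E; move: hc.
  by rewrite E ltnNge leq_maxl.
by rewrite E ltnNge leq_maxr.
Qed.

Definition swap (a b : nat) : fperm :=
  FPerm (transpK a b) (transpK a b) (transp_fin a b).

Lemma perm_inv_fin (p : fperm) : exists n, forall a, n <= a -> fpinv p a = a.
Proof. by have [n Hn] := fp_fin p; exists n => a Ha; rewrite -{1}(Hn a Ha) fpK. Qed.

Definition perm_inv (p : fperm) : fperm := FPerm (fpinvK p) (fpK p) (perm_inv_fin p).

Section Composition.
Variables p q : fperm.

Lemma perm_compK : cancel (fp p \o fp q) (fpinv q \o fpinv p).
Proof. by move=> a /=; rewrite !fpK. Qed.

Lemma perm_compVK : cancel (fpinv q \o fpinv p) (fp p \o fp q).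
Proof. by move=> a /=; rewrite !fpinvK. Qed.

Lemma perm_comp_fin : exists n, forall a, n <= a -> (fp p \o fp q) a = a.
Proof.
have [n Hn] := fp_fin p; have [m Hm] := fp_fin q.
exists (maxn n m) => a Ha /=; rewrite Hm ?Hn //.
  exact: leq_trans (leq_maxl _ _) Ha.
exact: leq_trans (leq_maxr _ _) Ha.
Qed.

End Composition.

Definition perm_comp (p q : fperm) : fperm :=
  FPerm (perm_compK p q) (perm_compVK p q) (perm_comp_fin p q).

Definition perm_id : fperm :=
  @FPerm id id (fun _ => erefl) (fun _ => erefl) (ex_intro _ 0 (fun _ _ => erefl)).

Section LeastSupport.
Variable X : nomset.
Implicit Types (x : X) (S T : seq nat).

Lemma supports_sub S S' x : supports S x -> {subset S <= S'} -> supports S' x.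
Proof. by move=> H sub p Hp; apply: H => a Ha; apply: Hp; apply: sub. Qed.

Lemma supports_act S x (r : fperm) :
  supports S x -> supports (map (fp r) S) (nact r x).
Proof.
move=> H p Hp.
set q := perm_comp (perm_inv r) (perm_comp p r).
have Hq : nact q x = x by apply: H => a Ha; rewrite /= Hp ?fpK //; exact: map_f.
rewrite -(nact_comp (r := perm_comp p r)) //.
by rewrite (nact_comp (p := r) (q := q)) ?Hq // => a /=; rewrite fpinvK.
Qed.

(* Exchange step: a name outside some support T can be dropped from any
   support S (swap it with a name fresh for everything involved). *)
Lemma supports_drop S T x a :
  supports S x -> supports T x -> a \notin T -> supports [seq c <- S | c != a] x.
Proof.
move=> HS HT aT p Hp.
have [n Hn] := fp_fin p.
set b := fresh_name (n :: a :: S ++ T).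
have := fresh_nameP (n :: a :: S ++ T); rewrite -/b !inE !mem_cat !negb_or.
case/and4P=> bn ba bS bT.
have nb : n <= b by apply/ltnW/fresh_name_gt; rewrite inE eqxx.
have Hx : nact (swap a b) x = x.
  apply: HT => c Hc; apply: transp_id.
    by apply: contraNneq aT => <-.
  by apply: contraNneq bT => <-.
have := supports_act (r := swap a b) HS; rewrite Hx; apply.
move=> c /mapP [s Hs ->] /=; have [->|sa] := eqVneq s a.
  by rewrite /transp eqxx Hn.
rewrite transp_id //; last by apply: contraNneq bS => <-.
by apply: Hp; rewrite mem_filter sa.
Qed.

Definition in_suppb x a : bool :=
  if excluded_middle_informative (in_supp x a) then true else false.

Lemma in_suppbP x a : reflect (in_supp x a) (in_suppb x a).
Proof. by rewrite /in_suppb; case: excluded_middle_informative => h; constructor. Qed.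

Lemma supp_spec x : uniq (supp x) /\ forall a, a \in supp x <-> in_supp x a.
Proof.
apply: (epsilon_spec (inhabits [::])
  (fun s => uniq s /\ forall a, a \in s <-> in_supp x a)).
have [S HS] := nfin x.
exists (undup [seq a <- S | in_suppb x a]); split; first exact: undup_uniq.
move=> a; rewrite mem_undup mem_filter; split; first by case/andP => /in_suppbP.
by move=> h; rewrite (h S HS) andbT; apply/in_suppbP.
Qed.

Lemma supp_uniq x : uniq (supp x).
Proof. by case: (supp_spec x). Qed.

Lemma mem_supp x a : a \in supp x <-> in_supp x a.
Proof. by case: (supp_spec x). Qed.

Lemma supp_min S x : supports S x -> {subset supp x <= S}.
Proof. by move=> H a /mem_supp; apply. Qed.

Lemma supports_prune x L K :
  supports (L ++ K) x -> supports ([seq a <- L | a \in supp x] ++ K) x.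
Proof.
elim: L K => [|a L IH] K //= H.
have [ax|ax] := boolP (a \in supp x).
  have H1 : supports (L ++ a :: K) x.
    by refine (supports_sub H _) => c; rewrite /= !(mem_cat, inE) orbCA.
  by refine (supports_sub (IH _ H1) _) => c; rewrite /= !(mem_cat, inE) orbCA.
have [T [HT aT]] : exists T, supports T x /\ a \notin T.
  apply: NNPP => N; move/negP: ax; apply; apply/mem_supp => T HT.
  by apply: NNPP => aT; apply: N; exists T; split => //; apply/negP.
apply: IH; refine (supports_sub (supports_drop H HT aT) _) => c.
by rewrite mem_filter /= inE => /andP [/negbTE ->].
Qed.

Lemma supp_supports x : supports (supp x) x.
Proof.
have [S HS] := nfin x.
have := @supports_prune x S [::]; rewrite !cats0 => /(_ HS) H.
by refine (supports_sub H _) => a; rewrite mem_filter => /andP [].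
Qed.

Lemma supp_act x (r : fperm) : {subset supp (nact r x) <= map (fp r) (supp x)}.
Proof. exact/supp_min/supports_act/supp_supports. Qed.

Lemma size_supp_act x (r : fperm) : size (supp x) <= size (supp (nact r x)).
Proof.
have E : nact (perm_inv r) (nact r x) = x.
  by rewrite -(nact_comp (r := perm_id)) ?nact_id // => a /=; rewrite fpK.
rewrite -[X in _ <= X](size_map (fp (perm_inv r))).
apply: uniq_leq_size; first exact: supp_uniq.
by move=> a; rewrite -{1}E; apply: supp_act.
Qed.

End LeastSupport.

Lemma supp_equivariant (X Y : nomset) (f : X -> Y) (x : X) :
  equivariant f -> {subset supp (f x) <= supp x}.
Proof. by move=> ef; apply: supp_min => p Hp; rewrite -ef (supp_supports Hp). Qed.

Lemma equivariant_fixed (X Y : nomset) (f : X -> Y) (x : X) (r : fperm) :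
  equivariant f -> (forall a, a \in supp (f x) -> fp r a = a) ->
  f (nact r x) = f x.
Proof. by move=> ef Hr; rewrite ef supp_supports. Qed.

Section Pairs.
Variables X1 X2 : nomset.

Lemma supp_pair (x1 : X1) (x2 : X2) a :
  (a \in @supp (prod_nom X1 X2) (x1, x2)) = (a \in supp x1) || (a \in supp x2).
Proof.
apply/idP/idP.
  move/(@supp_min (prod_nom X1 X2) (supp x1 ++ supp x2)); rewrite mem_cat; apply.
  move=> p Hp; rewrite /= /prod_act /= !supp_supports // => c Hc;
    by apply: Hp; rewrite mem_cat Hc ?orbT.
case/orP => h; apply/mem_supp => S HS.
  apply: (@supp_min X1 S x1) h => p Hp.
  by have := HS p Hp; rewrite /= /prod_act /= => -[].
apply: (@supp_min X2 S x2) h => p Hp.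
by have := HS p Hp; rewrite /= /prod_act /= => -[].
Qed.

Definition common (x1 : X1) (x2 : X2) : seq nat := [seq a <- supp x2 | a \in supp x1].

Lemma mem_common (x1 : X1) (x2 : X2) a :
  (a \in common x1 x2) = (a \in supp x1) && (a \in supp x2).
Proof. by rewrite mem_filter andbC. Qed.

Lemma common_uniq (x1 : X1) (x2 : X2) : uniq (common x1 x2).
Proof. exact/filter_uniq/supp_uniq. Qed.

Lemma size_supp_pair (x1 : X1) (x2 : X2) :
  size (@supp (prod_nom X1 X2) (x1, x2)) + size (common x1 x2) =
  size (supp x1) + size (supp x2).
Proof.
have P : perm_eq (@supp (prod_nom X1 X2) (x1, x2))
                 (supp x1 ++ [seq a <- supp x2 | a \notin supp x1]).
  apply: uniq_perm; first exact: supp_uniq.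
    rewrite cat_uniq supp_uniq filter_uniq ?supp_uniq // andbT.
    by apply/hasPn => a; rewrite mem_filter => /andP [].
  by move=> a; rewrite supp_pair mem_cat mem_filter; case: (a \in supp x1).
rewrite (perm_size P) size_cat /common !size_filter -addnA.
by rewrite [count (predC _) _ + _]addnC count_predC.
Qed.

End Pairs.

Lemma freshen_list (X : nomset) (K A : seq nat) (L : seq nat) (x : X) :
  (forall c, c \in supp x -> c \notin K -> c \in A -> c \in L) ->
  exists r : fperm, (forall a, a \in K -> fp r a = a) /\
    forall c, c \in supp (nact r x) -> c \in A -> c \in K.
Proof.
elim: L x => [|a L IH] x H.
  exists perm_id; split => // c; rewrite nact_id // => Hc cA.
  by apply: contraT => cK; have := H c Hc cK cA.
have [aK|aK] := boolP (a \in K).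
  apply: IH => c Hc cK cA; have := H c Hc cK cA; rewrite inE.
  by case/orP => // /eqP E; move: cK; rewrite E aK.
set b := fresh_name (a :: K ++ A ++ supp x ++ L).
have := fresh_nameP (a :: K ++ A ++ supp x ++ L).
rewrite -/b !inE !mem_cat !negb_or => /and5P [ba bK bA bx _].
have Hswap : forall c, c \in supp (nact (swap a b) x) -> c \notin K ->
    c \in A -> c \in L.
  move=> c /supp_act /mapP [s Hs ->] /=.
  have [->|sa] := eqVneq s a; first by rewrite /transp eqxx (negbTE bA).
  have [sb|sb] := eqVneq s b; first by move: Hs; rewrite sb (negbTE bx).
  rewrite transp_id // => sK sA; have := H s Hs sK sA.
  by rewrite inE (negbTE sa).
have [r [Kr Hr]] := IH _ Hswap.
exists (perm_comp r (swap a b)); split.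
  move=> c cK /=; rewrite transp_id ?Kr //.
    by apply: contraNneq aK => <-.
  by apply: contraNneq bK => <-.
by move=> c; rewrite (nact_comp (p := r) (q := swap a b)) //; apply: Hr.
Qed.

Lemma freshen (X : nomset) (K A : seq nat) (x : X) :
  exists r : fperm, (forall a, a \in K -> fp r a = a) /\
    forall c, c \in supp (nact r x) -> c \in A -> c \in K.
Proof. exact: (@freshen_list X K A (supp x) x (fun c h _ _ => h)). Qed.

Lemma fsafe_fibre (X Y : nomset) (f : X -> Y) (w u : X) :
  fsafe f w -> f u = f w -> size (supp w) <= size (supp u) -> fsafe f u.
Proof. by move=> sw e le v ev; apply: leq_trans le; apply: sw; rewrite ev e. Qed.

Section ProductSafety.
Variables (X1 Y1 X2 Y2 : nomset) (f1 : X1 -> Y1) (f2 : X2 -> Y2).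

Lemma fresh_bv_common (u1 : X1) (u2 : X2) :
  fresh (bv f1 u1) u2 /\ fresh (bv f2 u2) u1 <->
  forall a, a \in common u1 u2 -> (a \in supp (f1 u1)) && (a \in supp (f2 u2)).
Proof.
split.
  case=> fr1 fr2 a; rewrite mem_common => /andP [a1 a2].
  apply/andP; split; apply: contraT => na.
    by have := fr1 a; rewrite mem_filter na a1 a2 => /(_ isT).
  by have := fr2 a; rewrite mem_filter na a1 a2 => /(_ isT).
move=> H; split=> a; rewrite mem_filter => /andP [na a1]; apply/negP => a2.
  by have := H a; rewrite mem_common a1 a2 (negbTE na) => /(_ isT).
by have := H a; rewrite mem_common a1 a2 (negbTE na) andbF => /(_ isT).
Qed.

Hypotheses (eq1 : equivariant f1) (eq2 : equivariant f2).

Lemma common_fibre_sub (x1 y1 : X1) (x2 y2 : X2) :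
  (forall a, a \in common x1 x2 -> (a \in supp (f1 x1)) && (a \in supp (f2 x2))) ->
  f1 y1 = f1 x1 -> f2 y2 = f2 x2 -> {subset common x1 x2 <= common y1 y2}.
Proof.
move=> H e1 e2 a /H /andP [h1 h2]; rewrite -e1 in h1; rewrite -e2 in h2.
by rewrite mem_common (supp_equivariant eq1 h1) (supp_equivariant eq2 h2).
Qed.

(* Safe preimages can be chosen so that they share only names of both
   images: rename the bound names of w1 away from supp y2, then those of w2
   away from the (renamed) w1. *)
Lemma separated_safe_preimages (s1 : safe f1) (s2 : safe f2) (y1 : Y1) (y2 : Y2) :
  exists w1 w2, [/\ f1 w1 = y1, fsafe f1 w1, f2 w2 = y2, fsafe f2 w2 &
    forall a, a \in common w1 w2 -> (a \in supp y1) && (a \in supp y2)].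
Proof.
have [w1 [ew1 sw1]] := s1 y1; have [w2 [ew2 sw2]] := s2 y2.
have [r1 [Kr1 Hr1]] := freshen (supp y1) (supp y2) w1.
have ew1' : f1 (nact r1 w1) = y1 by rewrite equivariant_fixed // ew1.
have [r2 [Kr2 Hr2]] := freshen (supp y2) (supp (nact r1 w1)) w2.
have ew2' : f2 (nact r2 w2) = y2 by rewrite equivariant_fixed // ew2.
exists (nact r1 w1), (nact r2 w2); split => //.
- by apply: fsafe_fibre sw1 _ (size_supp_act _ _); rewrite ew1 ew1'.
- by apply: fsafe_fibre sw2 _ (size_supp_act _ _); rewrite ew2 ew2'.
move=> a; rewrite mem_common => /andP [a1 a2].
have a_y2 : a \in supp y2 := Hr2 a a2 a1.
by rewrite a_y2 (Hr1 a a1 a_y2).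
Qed.

(* "<=": by the freshness conditions, common u1 u2 survives in every
   (v1, v2) of the fibre, while |supp v_i| <= |supp u_i| by safety. *)
Lemma fsafe_pair_sufficient (u1 : X1) (u2 : X2) :
  fsafe f1 u1 -> fsafe f2 u2 -> fresh (bv f1 u1) u2 -> fresh (bv f2 u2) u1 ->
  @fsafe (prod_nom X1 X2) (prod_nom Y1 Y2) (prod_map f1 f2) (u1, u2).
Proof.
move=> h1 h2 fr1 fr2 [v1 v2] [/= e1 e2].
have Hu := proj1 (fresh_bv_common u1 u2) (conj fr1 fr2).
have le : size (common u1 u2) <= size (common v1 v2).
  exact: uniq_leq_size (common_uniq u1 u2) (common_fibre_sub Hu e1 e2).
have := h1 _ e1; have := h2 _ e2.
have := size_supp_pair v1 v2; have := size_supp_pair u1 u2; lia.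
Qed.

(* "=>": compare (u1, u2) with separated safe preimages (w1, w2) of
   (f1 u1, f2 u2); counting forces |supp u_i| = |supp w_i| and
   common u1 u2 = common w1 w2, which lies in the images' supports. *)
Lemma fsafe_pair_necessary (s1 : safe f1) (s2 : safe f2) (u1 : X1) (u2 : X2) :
  @fsafe (prod_nom X1 X2) (prod_nom Y1 Y2) (prod_map f1 f2) (u1, u2) ->
  [/\ fsafe f1 u1, fsafe f2 u2, fresh (bv f1 u1) u2 & fresh (bv f2 u2) u1].
Proof.
move=> H.
have [w1 [w2 [ew1 sw1 ew2 sw2 Hw]]] := separated_safe_preimages s1 s2 (f1 u1) (f2 u2).
have Hp := H (w1, w2) (f_equal2 pair ew1 ew2).
rewrite -{1}ew1 -{1}ew2 in Hw.
have sub := common_fibre_sub Hw (esym ew1) (esym ew2).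
have le : size (common w1 w2) <= size (common u1 u2).
  exact: uniq_leq_size (common_uniq w1 w2) sub.
have su1 := sw1 u1 (esym ew1); have su2 := sw2 u2 (esym ew2).
have Pu := size_supp_pair u1 u2; have Pw := size_supp_pair w1 w2.
have ge : size (common u1 u2) <= size (common w1 w2) by lia.
have [_ eqc] := uniq_min_size (common_uniq w1 w2) sub ge.
have [fr1 fr2] : fresh (bv f1 u1) u2 /\ fresh (bv f2 u2) u1.
  by apply/fresh_bv_common => a; rewrite -eqc -ew1 -ew2; apply: Hw.
have le1 : size (supp w1) <= size (supp u1) by lia.
have le2 : size (supp w2) <= size (supp u2) by lia.
by split=> //; [exact: fsafe_fibre sw1 (esym ew1) le1 | exact: fsafe_fibre sw2 (esym ew2) le2].
Qed.

End ProductSafety.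

Theorem lemma5p28 (X1 Y1 X2 Y2 : nomset) (f1 : X1 -> Y1) (f2 : X2 -> Y2)
  (eq1 : equivariant f1) (eq2 : equivariant f2)
  (s1 : safe f1) (s2 : safe f2) (u1 : X1) (u2 : X2) :
  @fsafe (prod_nom X1 X2) (prod_nom Y1 Y2) (prod_map f1 f2) (u1, u2) <->
  [/\ fsafe f1 u1, fsafe f2 u2, fresh (bv f1 u1) u2 & fresh (bv f2 u2) u1].
Proof.
split; first exact: fsafe_pair_necessary.
by case; apply: fsafe_pair_sufficient.
Qed.
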